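(* Let $F\ge2$ and $K\ge1$ be integers, and write $K=\ell F+i$ with integers $\ell\ge0$ and $0\le i<F$. Then $$s(F,K,1)=\frac{\ell F(F-1)}{2}+\frac{i(i-1)}{2}+i(F-i).$$
   Context: A placement delivery array $S$-PDA$(F,K,Z)$ is an $F\times K$ array $R=(r_{j,k})$, $1\le j\le F$, $1\le k\le K$, over a finite set $S$ such that: (1) each cell is either empty or contains an element of $S$; (2) each column contains exactly $Z$ empty cells; (3) each element of $S$ occurs at most once in each row and at most once in each column; (4) if two distinct nonempty cells satisfy $r_{j_1,k_1}=r_{j_2,k_2}=t\in S$, then the cells $r_{j_1,k_2}$ and $r_{j_2,k_1}$ are empty. For integers $F,K\ge1$, $0\le Z\le F$, define $s(F,K,Z)=\min\{|S| : \text{there exists an } S\text{-PDA}(F,K,Z)\}$. *)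

From mathcomp Require Import all_boot.
Set Implicit Arguments. Unset Strict Implicit. Unset Printing Implicit Defensive.

(* An F x K array over S: cell (j,k) is None (empty) or Some t. *)
Definition is_PDA (S : finType) (F K Z : nat) (R : 'I_F -> 'I_K -> option S) : Prop :=
  (forall k : 'I_K, #|[set j : 'I_F | R j k == None]| = Z) /\
  (forall (j : 'I_F) (k1 k2 : 'I_K) (t : S),
      R j k1 = Some t -> R j k2 = Some t -> k1 = k2) /\
  (forall (j1 j2 : 'I_F) (k : 'I_K) (t : S),
      R j1 k = Some t -> R j2 k = Some t -> j1 = j2) /\
  (forall (j1 j2 : 'I_F) (k1 k2 : 'I_K) (t : S),
      (j1, k1) <> (j2, k2) -> R j1 k1 = Some t -> R j2 k2 = Some t ->
      R j1 k2 = None /\ R j2 k1 = None).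

(* s(F,K,Z) = m : m is the minimum size of a symbol set S admitting an
   S-PDA(F,K,Z). *)
Definition is_min_PDA_size (F K Z m : nat) : Prop :=
  (exists R : 'I_F -> 'I_K -> option 'I_m, @is_PDA _ F K Z R) /\
  (forall (S : finType) (R : 'I_F -> 'I_K -> option S), @is_PDA S F K Z R -> m <= #|S|).

From mathcomp Require Import all_boot zify.
Set Implicit Arguments. Unset Strict Implicit. Unset Printing Implicit Defensive.

(* With Z = 1, let e(k) be the row of the empty cell of column k and n_a the number
   of columns whose empty cell lies in row a; order the rows by decreasing n_a.  By
   condition (4) the filled cells (j, k) with j after e(k) carry pairwise distinct
   symbols, and there are sum_{a<>b} max(n_a, n_b) = ((F-1)K + sum_{a<>b} |n_a-n_b|)/2
   of them (pairs unordered).  The imbalance sum |n_a - n_b| of F numbers adding up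
   to K is at least i(F-i), which gives the lower bound.  Conversely, cut the columns
   into blocks of F, put the empty cell of the r-th column of a block in row r, and
   give each block one fresh symbol per unordered pair {j, r} of distinct rows. *)

Definition cut_size (F x : nat) := x * (F - x).

Lemma cut_size_modD F r c : r < F -> c <= F ->
  cut_size F ((r + c) %% F) <= cut_size F r + cut_size F c.
Proof.
rewrite /cut_size => rF cF; case: (ltnP (r + c) F) => rcF.
  by rewrite modn_small //; nia.
have -> : (r + c) %% F = r + c - F.
  by rewrite -[in LHS](subnK rcF) modnDr modn_small //; lia.
nia.
Qed.

(* Truncated subtraction: each unordered pair {a, b} contributes |n a - n b| once. *)
Definition imbalance F (n : 'I_F -> nat) := \sum_(a < F) \sum_(b < F) (n b - n a).

Lemma sum_predn F (n : 'I_F -> nat) :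
  \sum_(a < F) n a = \sum_(a < F) (n a).-1 + \sum_(a < F) (0 < n a).
Proof.
by rewrite -big_split /=; apply: eq_bigr => a _; case: (n a) => // x; rewrite addn1.
Qed.

Lemma imbalance_predn F (n : 'I_F -> nat) :
  imbalance n = imbalance (fun a => (n a).-1) + cut_size F (\sum_(a < F) (0 < n a)).
Proof.
set c := \sum_(a < F) _.
have zeros : \sum_(a < F) (n a == 0) = F - c.
  suff : \sum_(a < F) (n a == 0) + c = F by lia.
  rewrite -big_split -[RHS]card_ord -sum1_card; apply: eq_bigr => a _; by case: (n a).
have -> : cut_size F c = \sum_(a < F) \sum_(b < F) ((n a == 0) * (0 < n b)).
  by rewrite /cut_size -zeros mulnC big_distrl; apply: eq_bigr => a _; rewrite big_distrr.
rewrite /imbalance -big_split; apply: eq_bigr => a _; rewrite -big_split.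
by apply: eq_bigr => b _ /=; case: (n a) => [|x]; case: (n b) => [|y] /=; lia.
Qed.

(* Removing one unit from every positive entry lowers the sum by the number c of
   positive entries and the imbalance by exactly [cut_size F c]. *)
Lemma imbalance_ge_cut F (n : 'I_F -> nat) : 0 < F ->
  cut_size F ((\sum_(a < F) n a) %% F) <= imbalance n.
Proof.
move=> F0; have [N] := ubnP (\sum_(a < F) n a); elim: N n => // N IH n.
rewrite ltnS => sumN; set c := \sum_(a < F) (0 < n a).
have [c0 | cpos] := posnP c.
  suff -> : \sum_(a < F) n a = 0 by rewrite mod0n.
  apply/eqP; rewrite sum_nat_eq0; apply/forallP => a.
  by move/eqP: c0; rewrite sum_nat_eq0 => /forallP/(_ a); case: (n a).
have cF : c <= F.
  by rewrite -[F in _ <= F]card_ord -sum1_card; apply: leq_sum => a _; case: (0 < n a).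
rewrite imbalance_predn sum_predn -/c -modnDml.
apply: leq_trans (cut_size_modD (ltn_pmod _ F0) cF) _.
by rewrite leq_add2r IH //; move: sumN; rewrite sum_predn -/c; lia.
Qed.

Lemma pda1_holes (S : finType) F K (R : 'I_F -> 'I_K -> option S) :
  is_PDA 1 R -> exists e : 'I_K -> 'I_F, forall k j, (R j k == None) = (j == e k).
Proof.
move=> [one_hole _].
have /fin_all_exists[e He] k : exists a, [set j | R j k == None] = [set a].
  by apply/cards1P; rewrite one_hole.
by exists e => k j; rewrite -[j == _]in_set1 -He inE.
Qed.

Section HoleDominance.
Variables (S : finType) (F K : nat) (R : 'I_F -> 'I_K -> option S).
Variables (e : 'I_K -> 'I_F) (gt : rel 'I_F).
Hypothesis holes : forall k j, (R j k == None) = (j == e k).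
Hypothesis gt_asym : forall a b, gt a b -> ~~ gt b a.

(* Two filled cells dominated by the holes of their columns cannot share a symbol:
   by condition (4) each of them would lie in the hole row of the other's column. *)
Lemma card_dominated_cells : is_PDA 1 R ->
  #|[set x : 'I_F * 'I_K | gt (e x.2) x.1]| <= #|S|.
Proof.
move=> [_ [_ [_ crossed_holes]]]; set C := [set x | _].
have filled x : x \in C -> R x.1 x.2 != None.
  rewrite inE holes; apply: contraL => /eqP ->.
  by apply/negP => g; move/negP: (gt_asym g).
have injC : {in C &, injective (fun x => R x.1 x.2)}.
  move=> [j1 k1] [j2 k2] C1 C2 /= same.
  case: (eqVneq (j1, k1) (j2, k2)) => // /eqP ne.
  case E1: (R j1 k1) (filled _ C1) => [t|] //= _.
  have [/eqP h2 /eqP h1] := crossed_holes _ _ _ _ _ ne E1 (etrans (esym same) E1).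
  rewrite !holes in h1 h2; move: C1 C2; rewrite !inE /= -(eqP h1) -(eqP h2) => g.
  by rewrite (negbTE (gt_asym g)).
rewrite -(card_in_imset injC) -[#|S|]/(#|S|.+1.-1) -card_option -(cardsC1 None).
by apply/subset_leq_card/subsetP => _ /imsetP[x /filled xC ->]; rewrite !inE.
Qed.

End HoleDominance.

Lemma sum_fiber (I J : finType) (e : I -> J) (f : J -> nat) :
  \sum_i f (e i) = \sum_j #|[set i | e i == j]| * f j.
Proof.
rewrite (partition_big e predT) //; apply: eq_bigr => j _.
by rewrite -sum_nat_cond_const; apply: eq_bigr => i /eqP ->.
Qed.

Lemma card_dominated_cellsE F K (e : 'I_K -> 'I_F) (gt : rel 'I_F) :
  #|[set x : 'I_F * 'I_K | gt (e x.2) x.1]| =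
  \sum_(a < F) #|[set k | e k == a]| * \sum_(b < F) gt a b.
Proof.
rewrite -(sum_fiber e (fun a => \sum_(b < F) gt a b)) exchange_big pair_big /=.
by rewrite -sum1_card big_mkcond; apply: eq_bigr => -[j k] _; rewrite inE; case: gt.
Qed.

Definition heavier F (n : 'I_F -> nat) : rel 'I_F :=
  fun a b => (n b < n a) || ((n a == n b) && (b < a)).

Lemma heavier_asym F (n : 'I_F -> nat) a b : heavier n a b -> ~~ heavier n b a.
Proof. rewrite /heavier; lia. Qed.

Lemma heavier_pair F (n : 'I_F -> nat) a b :
  heavier n a b * n a + heavier n b a * n b = (a != b) * n a + (n b - n a).
Proof.
case: (eqVneq a b) => [<- | ab]; first by rewrite /heavier ltnn eqxx ltnn subnn.
have : val b != val a by rewrite eq_sym.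
rewrite /heavier; case: (ltngtP (n b) (n a)); case: (ltngtP b a) => //=; lia.
Qed.

(* Each unordered pair {a, b} of rows contributes max (n a) (n b) to the left sum. *)
Lemma sum_heavier F (n : 'I_F -> nat) :
  2 * \sum_(a < F) n a * \sum_(b < F) heavier n a b =
  (F - 1) * \sum_(a < F) n a + imbalance n.
Proof.
have neq_count (a : 'I_F) : \sum_(b < F) (a != b) = F - 1.
  rewrite subn1 -[F in F.-1]card_ord -(cardC1 a) -sum1_card [RHS]big_mkcond.
  by apply: eq_bigr => b _; rewrite !inE eq_sym.
have -> : \sum_(a < F) n a * \sum_(b < F) heavier n a b =
          \sum_(a < F) \sum_(b < F) heavier n a b * n a.
  by apply: eq_bigr => a _; rewrite big_distrr; apply: eq_bigr => b _; rewrite mulnC.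
rewrite mul2n -addnn [X in _ + X]exchange_big -big_split /=.
under eq_bigr do rewrite -big_split /=.
under eq_bigr do under eq_bigr do rewrite heavier_pair.
under eq_bigr do rewrite big_split /=.
rewrite big_split /= /imbalance big_distrr; congr (_ + _).
by apply: eq_bigr => a _; rewrite -big_distrl /= neq_count mulnC.
Qed.

Lemma pda1_card_lower (S : finType) F K (R : 'I_F -> 'I_K -> option S) : 0 < F ->
  is_PDA 1 R -> (F - 1) * K + cut_size F (K %% F) <= 2 * #|S|.
Proof.
move=> F0 pda; have [e holes] := pda1_holes pda.
pose n a := #|[set k | e k == a]|.
have sum_n : \sum_(a < F) n a = K.
  have := sum_fiber e (fun=> 1); rewrite /= sum1_card card_ord => ->.
  by apply: eq_bigr => a _; rewrite muln1.
have := card_dominated_cells holes (@heavier_asym F n) pda.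
rewrite card_dominated_cellsE.
have := sum_heavier n; have := imbalance_ge_cut n F0; rewrite sum_n /n; lia.
Qed.

(* [pair_offset F x] counts the pairs [a < b < F] with [a < x]; ordering such pairs
   lexicographically, [pair_index F a b] is the rank of the pair [{a, b}]. *)
Fixpoint pair_offset (F x : nat) : nat :=
  if x is x'.+1 then pair_offset F x' + (F - 1 - x') else 0.

Definition pair_index F a b := pair_offset F (minn a b) + (maxn a b - minn a b - 1).

Lemma pair_offset_double F x : x <= F ->
  2 * pair_offset F x = x * (x - 1) + 2 * x * (F - x).
Proof.
elim: x => [|x IH] xF //=; rewrite mulnDr IH; last lia.
have [d ->] : exists d, F = x.+1 + d by exists (F - x.+1); lia.
nia.
Qed.

Lemma leq_pair_offset F : {homo pair_offset F : x y / x <= y}.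
Proof.
move=> x y; elim: y => [|y IH]; first by rewrite leqn0 => /eqP ->.
rewrite leq_eqVlt ltnS => /predU1P[-> // | /IH xy].
exact: leq_trans xy (leq_addr _ _).
Qed.

Lemma pair_index_lt F a b x : a < F -> b < F -> a != b -> minn a b < x ->
  pair_index F a b < pair_offset F x.
Proof.
move=> aF bF ab ax; apply: leq_trans (leq_pair_offset F ax).
rewrite /pair_index /=; lia.
Qed.

Lemma pair_index_inj F a b a' b' : a < F -> b < F -> a != b ->
  a' < F -> b' < F -> a' != b' -> pair_index F a b = pair_index F a' b' ->
  minn a b = minn a' b' /\ maxn a b = maxn a' b'.
Proof.
move=> aF bF ab a'F b'F a'b' same.
case: (ltngtP (minn a b) (minn a' b')) => [lt | gt | eq_min].
- have := pair_index_lt aF bF ab lt; rewrite same /pair_index; lia.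
- have := pair_index_lt a'F b'F a'b' gt; rewrite -same /pair_index; lia.
- by move: same; rewrite /pair_index eq_min => /addnI; lia.
Qed.

Section Construction.
Variables F K l i : nat.
Hypotheses (F0 : 0 < F) (K_eq : K = l * F + i) (iF : i < F).

Definition pda1_size := l * pair_offset F F + pair_offset F i.

(* Column [k] is the [k %% F]-th column of block [k %/ F]; each block uses its own
   symbols, one per unordered pair of distinct rows. *)
Definition block_symbol j k := k %/ F * pair_offset F F + pair_index F j (k %% F).

Lemma block_symbol_lt j k : j < F -> k < K -> j != k %% F ->
  block_symbol j k < pda1_size.
Proof.
move=> jF kK jk; have aF : k %% F < F by rewrite ltn_mod.
have [ql | lq] := ltnP (k %/ F) l.
  have := pair_index_lt jF aF jk (leq_ltn_trans (geq_minr _ _) aF).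
  have : k %/ F * pair_offset F F + pair_offset F F <= l * pair_offset F F.
    by rewrite -mulSnr leq_mul2r ql orbT.
  rewrite /block_symbol /pda1_size; lia.
have q_eq : k %/ F = l.
  by apply/eqP; rewrite eqn_leq lq andbT -ltnS ltn_divLR //; lia.
have ai : k %% F < i by move: (divn_eq k F); rewrite q_eq; lia.
have := pair_index_lt jF aF jk (leq_ltn_trans (geq_minr _ _) ai).
rewrite /block_symbol /pda1_size q_eq; lia.
Qed.

Lemma block_symbol_inj j1 k1 j2 k2 :
  j1 < F -> j1 != k1 %% F -> j2 < F -> j2 != k2 %% F ->
  block_symbol j1 k1 = block_symbol j2 k2 ->
  k1 %/ F = k2 %/ F /\
  minn j1 (k1 %% F) = minn j2 (k2 %% F) /\ maxn j1 (k1 %% F) = maxn j2 (k2 %% F).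
Proof.
move=> j1F jk1 j2F jk2 same.
have lt_block j k : j < F -> j != k %% F -> pair_index F j (k %% F) < pair_offset F F.
  by move=> jF jk; apply: pair_index_lt; rewrite ?ltn_mod //; lia.
have BB0 : 0 < pair_offset F F := leq_ltn_trans (leq0n _) (lt_block _ _ j1F jk1).
have q_eq : k1 %/ F = k2 %/ F.
  have := congr1 (divn^~ (pair_offset F F)) same.
  rewrite /block_symbol !divnMDl // (divn_small (lt_block _ _ j1F jk1)).
  by rewrite (divn_small (lt_block _ _ j2F jk2)) !addn0.
split=> //; move: same; rewrite /block_symbol q_eq => /addnI.
by apply: pair_index_inj; rewrite ?ltn_mod.
Qed.

Definition pda1_array (j : 'I_F) (k : 'I_K) : option 'I_pda1_size :=
  if j == k %% F :> nat then None else insub (block_symbol j k).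

Lemma pda1_array_none j k : (pda1_array j k == None) = (j == k %% F :> nat).
Proof.
rewrite /pda1_array; case: ifP => [_ // | /negbT jk].
by case: (insubP 'I_pda1_size) => // /negP[]; exact: block_symbol_lt.
Qed.

Lemma pda1_array_same_symbol j1 k1 j2 k2 t :
  pda1_array j1 k1 = Some t -> pda1_array j2 k2 = Some t ->
  k1 %/ F = k2 %/ F /\ (j1 = j2 :> nat /\ k1 %% F = k2 %% F \/
                        j1 = k2 %% F :> nat /\ k1 %% F = j2 :> nat).
Proof.
rewrite /pda1_array; case: ifP => // /negbT jk1; case: ifP => // /negbT jk2.
case: (insubP 'I_pda1_size) => // u1 _ val1 [<-].
case: (insubP 'I_pda1_size) => // u2 _ val2 [eq_u].
have [q_eq [eq_min eq_max]] := block_symbol_inj (ltn_ord j1) jk1 (ltn_ord j2) jk2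
  (etrans (esym val1) (etrans (congr1 val (esym eq_u)) val2)).
split=> //; lia.
Qed.

Lemma pda1_array_PDA : is_PDA 1 pda1_array.
Proof.
have ord_eq (k1 k2 : 'I_K) : k1 %/ F = k2 %/ F -> k1 %% F = k2 %% F -> k1 = k2.
  by move=> eq_q eq_r; apply: val_inj; rewrite /= (divn_eq k1 F) (divn_eq k2 F) eq_q eq_r.
split.
  move=> k; apply/eqP/cards1P; exists (Ordinal (ltn_pmod k F0)); apply/setP => j.
  by rewrite !inE pda1_array_none -(inj_eq val_inj).
split.
  move=> j k1 k2 t E1 E2.
  have [eq_q [[_ eq_r] | [_ e2]]] := pda1_array_same_symbol E1 E2; first exact: ord_eq.
  by move: (pda1_array_none j k1); rewrite E1 e2 eqxx.
split.
  move=> j1 j2 k t E1 E2.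
  have [_ [[e _] | [e1 _]]] := pda1_array_same_symbol E1 E2; first exact: val_inj.
  by move: (pda1_array_none j1 k); rewrite E1 e1 eqxx.
move=> j1 j2 k1 k2 t ne E1 E2.
have [eq_q [[e1 e2] | [e1 e2]]] := pda1_array_same_symbol E1 E2.
- by case: ne; rewrite (val_inj e1) (ord_eq _ _ eq_q e2).
- by split; apply/eqP; rewrite pda1_array_none ?e1 ?e2.
Qed.
End Construction.

Lemma pda1_sizeE F l i : i < F ->
  pda1_size F l i = l * F * (F - 1) %/ 2 + i * (i - 1) %/ 2 + i * (F - i).
Proof.
move=> iF; have := pair_offset_double (leqnn F); have := pair_offset_double (ltnW iF).
rewrite subnn muln0 addn0 => offset_i offset_F.
have -> : l * F * (F - 1) = l * pair_offset F F * 2 by nia.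
have -> : i * (i - 1) = (pair_offset F i - i * (F - i)) * 2 by nia.
rewrite !mulnK // /pda1_size; nia.
Qed.

Lemma pda1_size_double F l i : i < F ->
  2 * pda1_size F l i = (F - 1) * (l * F + i) + cut_size F i.
Proof.
move=> iF; have := pair_offset_double (leqnn F); have := pair_offset_double (ltnW iF).
rewrite /pda1_size /cut_size subnn muln0 addn0.
have [d ->] : exists d, F = i.+1 + d by exists (F - i.+1); lia.
nia.
Qed.

Theorem mainTheorem12 (F K l i : nat) :
  2 <= F -> 1 <= K -> K = l * F + i -> i < F ->
  is_min_PDA_size F K 1
    ((l * F * (F - 1)) %/ 2 + (i * (i - 1)) %/ 2 + i * (F - i)).
Proof.
move=> F2 _ K_eq iF; have F0 : 0 < F := ltnW F2.
rewrite -pda1_sizeE //; split.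
  by exists (pda1_array l i); apply: pda1_array_PDA.
move=> S R /(pda1_card_lower F0).
by rewrite K_eq modnMDl modn_small // -pda1_size_double // leq_pmul2l.
Qed.
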